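(* For every coherent distribution of $(X,Y)$ on $[0,1]^2$ with $EX=EY=p$, $$E|X-Y|\le 2p(1-p)\le\tfrac12,$$ with equality in the first inequality if $X=p$ and $Y$ has the Bernoulli$(p)$ distribution ($P(Y=1)=p$, $P(Y=0)=1-p$).
   Context: A distribution of $(X,Y)$ on $[0,1]^2$ is coherent if there exist, on some probability space, random variables with that joint distribution and an event $A$ such that $X=P(A\mid X)$ and $Y=P(A\mid Y)$. *)

From HB Require Import structures.
From mathcomp Require Import all_boot all_order all_algebra.
From mathcomp Require Import all_classical all_reals all_analysis.
Set Implicit Arguments. Unset Strict Implicit. Unset Printing Implicit Defensive.
Import Order.TTheory GRing.Theory Num.Theory.
Local Open Scope classical_set_scope.
Local Open Scope ring_scope.

(* [is_cond_prob P A X] : X is (a version of) the conditional probability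
   P(A | X) = E[1_A | sigma(X)]. *)
Definition is_cond_prob {d : measure_display} {T : measurableType d}
  {R : realType} (P : probability T R) (A : set T) (X : T -> R) : Prop :=
  measurable_fun setT X /\
  forall B : set R, measurable B ->
    P (A `&` X @^-1` B) = (\int[P]_(t in X @^-1` B) (X t)%:E)%E.

(* The pair (X, Y), with values in [0,1]^2, on the probability space (T, P),
   witnesses coherence via the event A: X = P(A|X) and Y = P(A|Y). *)
Definition coherent_pair {d : measure_display} {T : measurableType d}
  {R : realType} (P : probability T R) (A : set T) (X Y : T -> R) : Prop :=
  measurable A /\
  (forall t, 0 <= X t <= 1) /\ (forall t, 0 <= Y t <= 1) /\
  is_cond_prob P A X /\ is_cond_prob P A Y.

From HB Require Import structures.
From mathcomp Require Import all_boot all_order all_algebra.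
From mathcomp Require Import all_classical all_reals all_analysis.
From mathcomp Require Import measurable_realfun lra ring.
Import Order.TTheory GRing.Theory Num.Theory.
Import HBNNSimple.
Local Open Scope classical_set_scope.
Local Open Scope ring_scope.

(* The bound is witnessed by a pointwise dual certificate.  With the weight
   w(x) = 2p^2 / max(x, p^2), the function
     B(a, x) = p^2 + x - 2pa + (a - x) w(x)
   satisfies |x - y| <= B(a, x) + B(a, y) for a in {0, 1} and x, y in [0, 1]:
   B(0, .) is the distance to p^2 and B(1, .) dominates the distance to
   1 - (1 - p)^2, so this is the triangle inequality.  Now take a = 1_A.
   Since X = P(A | X), the defining identity E[1_A; X in B] = E[X; X in B]
   extends (simple functions, then monotone convergence) to
   E[(1_A - X) g(X)] = 0 for bounded measurable g >= 0, whence
   E[B(1_A, X)] = p^2 + p - 2p^2 = p(1 - p), and the same for Y.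
   In the equality case |p - Y| is 1 - p on {Y = 1} and p on {Y = 0}. *)

Section dual_bound.
Context {R : realFieldType}.
Implicit Types p q x y : R.

Definition dual_weight q x : R := 2 * q / Num.max x q.

Lemma dual_weight_ge0 {q} x : 0 <= q -> 0 <= dual_weight q x.
Proof. by move=> q0; rewrite divr_ge0 ?mulr_ge0// le_max q0 orbT. Qed.

Lemma dual_weight_le2 q x : 0 <= q -> dual_weight q x <= 2.
Proof.
move=> q0; have [->|qn0] := eqVneq q 0; first by rewrite /dual_weight mulr0 mul0r.
have mq : 0 < Num.max x q by rewrite lt_max [0 < q]lt_def qn0 q0 orbT.
by rewrite ler_pdivrMr// ler_pM2l// le_max lexx orbT.
Qed.

Lemma dual_weight_below {q x} : 0 <= x -> x < q -> dual_weight q x = 2.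
Proof.
move=> x0 xq; rewrite /dual_weight max_r ?ltW// mulfK//.
by rewrite gt_eqF// (le_lt_trans x0).
Qed.

Lemma mul_dual_weight {q x} : 0 <= q -> q <= x -> x * dual_weight q x = 2 * q.
Proof.
move=> q0 qx; rewrite /dual_weight max_l//.
have [x0|xn0] := eqVneq x 0; last by rewrite mulrC divfK.
by move: qx; rewrite x0 => q0'; rewrite (@le_anti _ _ q 0) ?q0 ?q0' ?mulr0 ?mul0r.
Qed.

Lemma dual_weight_nonincreasing q : 0 <= q -> nonincreasing_fun (dual_weight q).
Proof.
move=> q0 x y xy; have [->|qn0] := eqVneq q 0.
  by rewrite /dual_weight mulr0 !mul0r.
have qp : 0 < q by rewrite lt_def qn0 q0.
rewrite ler_pM2l ?mulr_gt0// lef_pV2 ?posrE ?lt_max ?qp ?orbT//.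
by rewrite ge_max !le_max xy lexx !orbT.
Qed.

Definition dual_bound p a x : R :=
  p ^+ 2 + x - 2 * p * a + (a - x) * dual_weight (p ^+ 2) x.

Lemma dual_bound0 p x : 0 <= x -> dual_bound p 0 x = `|x - p ^+ 2|.
Proof.
move=> x0; rewrite /dual_bound mulr0 subr0 sub0r mulNr.
have [xp|px] := ltP x (p ^+ 2).
  by rewrite dual_weight_below// ltr0_norm ?subr_lt0//; ring.
by rewrite mul_dual_weight ?sqr_ge0// ger0_norm ?subr_ge0//; ring.
Qed.

Lemma dual_bound1_ge p x : 0 <= x <= 1 ->
  `|x - (1 - (1 - p) ^+ 2)| <= dual_bound p 1 x.
Proof.
case/andP=> x0 x1; rewrite /dual_bound mulr1 ler_norml.
have w0 := dual_weight_ge0 x (sqr_ge0 p).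
apply/andP; split; last by rewrite !expr2; nra.
have [xp|px] := ltP x (p ^+ 2).
  by rewrite dual_weight_below//; have := sqr_ge0 (1 - p); rewrite !expr2; nra.
have xw := mul_dual_weight (sqr_ge0 p) px.
have [p_le0|p_gt0] := lerP p 0; first by rewrite !expr2; nra.
have x_gt0 : 0 < x := lt_le_trans (exprn_gt0 2 p_gt0) px.
rewrite -subr_ge0 -(pmulr_rge0 _ x_gt0).
by have := sqr_ge0 (x - p); rewrite !expr2 in xw *; nra.
Qed.

Lemma dist_le_dual_bound p (b : bool) x y : 0 <= x <= 1 -> 0 <= y <= 1 ->
  `|x - y| <= dual_bound p b%:R x + dual_bound p b%:R y.
Proof.
pose c := if b then 1 - (1 - p) ^+ 2 else p ^+ 2.
have dist_c z : 0 <= z <= 1 -> `|z - c| <= dual_bound p b%:R z.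
  rewrite /c; case: b {c} => z01; first exact: dual_bound1_ge.
  by rewrite [false%:R]/= dual_bound0//; case/andP: z01.
move=> /dist_c xc /dist_c yc.
by apply: le_trans (ler_distD c x y) _; rewrite [`|c - y|]distrC lerD.
Qed.

Lemma dual_bound_ge0 p (b : bool) x : 0 <= x <= 1 -> 0 <= dual_bound p b%:R x.
Proof.
move=> x01; have := @dist_le_dual_bound p b x x x01 x01.
by rewrite subrr normr0; lra.
Qed.

End dual_bound.

Lemma measurable_dual_weight {R : realType} {q : R} :
  0 <= q -> measurable_fun setT (dual_weight q).
Proof.
move=> q0; apply: nonincreasing_measurable => //.
exact: dual_weight_nonincreasing.
Qed.

Lemma bounded_integrable {R : realType} {d : measure_display}
    {T : measurableType d} (mu : {finite_measure set T -> \bar R})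
    (f : T -> R) (M : R) :
  measurable_fun setT f -> (forall t, `|f t| <= M) ->
  mu.-integrable setT (EFin \o f).
Proof.
move=> mf fM; apply: measurable_bounded_integrable => //.
  by rewrite ltey_eq fin_num_measure.
exists M; split; first exact: num_real.
by move=> N MN t _; exact: le_trans (fM t) (ltW MN).
Qed.

Section cond_prob.
Context {R : realType} {d : measure_display} {T : measurableType d}.
Context {P : probability T R} {A : set T} {X : T -> R}.
Hypotheses (mA : measurable A) (cpX : is_cond_prob P A X).
Hypothesis X01 : forall t, 0 <= X t <= 1.

Let mX : measurable_fun setT X := cpX.1.

Let mpreX B : measurable B -> measurable (X @^-1` B).
Proof. by move=> mB; rewrite -[X @^-1` B]setTI; exact: mX. Qed.

Let X0 t : 0 <= X t. Proof. by case/andP: (X01 t). Qed.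

Let mIA : measurable_fun setT (\1_A : T -> R). Proof. exact: measurable_indic. Qed.

Lemma integral_cond_prob_indic B : measurable B ->
  (\int[P]_(t in A) (\1_(X @^-1` B) t)%:E =
   \int[P]_t (X t * \1_(X @^-1` B) t)%:E)%E.
Proof.
move=> mB; rewrite integral_indic//; last exact: mpreX.
rewrite setIC; apply: eq_trans (cpX.2 B mB) _; rewrite integral_mkcond.
by apply: eq_integral => t _; rewrite epatch_indic /= EFinM.
Qed.

Lemma integral_cond_prob_nnsfun (s : {nnsfun R >-> R}) :
  (\int[P]_(t in A) (s (X t))%:E = \int[P]_t (X t * s (X t))%:E)%E.
Proof.
pose E r := X @^-1` (s @^-1` [set r]).
have mIE r : measurable_fun setT (\1_(E r) : T -> R).
  by apply/measurable_indic/mpreX/measurable_funPTI.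
transitivity (\sum_(r \in range s) \int[P]_(t in A) (r * \1_(E r) t)%:E)%E.
  under eq_integral do rewrite fimfunE -fsumEFin//.
  apply: ge0_integral_fsum => // r.
  - apply/measurable_EFinP/measurable_funM => //.
    exact: (measurable_funTS (mIE r)).
  - by move=> t _; have := nnfun_muleindic_ge0 s r (X t); rewrite -EFinM.
transitivity (\sum_(r \in range s) \int[P]_t (X t * (r * \1_(E r) t))%:E)%E.
  apply: eq_fsbigr => _ /[!inE] -[x _ <-].
  have sx0 : 0 <= s x := fun_ge0 x.
  under eq_integral do rewrite EFinM.
  under [RHS]eq_integral do rewrite mulrCA EFinM.
  rewrite !ge0_integralZl_EFin ?integral_cond_prob_indic//.
  - by move=> t _; rewrite lee_fin mulr_ge0.
  - exact/measurable_EFinP/measurable_funM.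
  - exact/measurable_EFinP/(measurable_funTS (mIE _)).
rewrite -ge0_integral_fsum//.
- apply: eq_integral => t _; rewrite fsumEFin// -mulr_fsumr.
  by rewrite [in RHS]fimfunE.
- by move=> r; apply/measurable_EFinP/measurable_funM => //; exact: measurable_funM.
- move=> r t _; rewrite lee_fin mulr_ge0//.
  by have := nnfun_muleindic_ge0 s r (X t); rewrite -EFinM lee_fin.
Qed.

Lemma integral_cond_prob (g : R -> R) : measurable_fun setT g ->
    (forall x, 0 <= g x) ->
  (\int[P]_(t in A) (g (X t))%:E = \int[P]_t (X t * g (X t))%:E)%E.
Proof.
move=> mg g0; have mgE : measurable_fun setT (EFin \o g) by exact/measurable_EFinP.
pose g_ := nnsfun_approx measurableT mgE.
have g_cvg x : (fun n => (g_ n x)%:E) @ \oo --> (g x)%:E.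
  by apply: cvg_nnsfun_approx => // y _; rewrite lee_fin.
have g_nd x m n : (m <= n)%N -> g_ m x <= g_ n x.
  by move=> mn; exact/lefP/nd_nnsfun_approx.
have mg_ n : measurable_fun setT (fun t => g_ n (X t)).
  exact: measurableT_comp.
transitivity (limn (fun n => \int[P]_(t in A) (g_ n (X t))%:E))%E.
  rewrite -monotone_convergence//.
  - by apply: eq_integral => t _; apply/esym/cvg_lim.
  - by move=> n; apply/measurable_EFinP/measurable_funTS.
  - by move=> n t _; rewrite lee_fin.
  - by move=> t _ m n mn; rewrite lee_fin g_nd.
transitivity (limn (fun n => \int[P]_t (X t * g_ n (X t))%:E))%E; last first.
  rewrite -monotone_convergence//.
  - apply: eq_integral => t _; apply/cvg_lim => //.
    under eq_fun do rewrite EFinM.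
    by rewrite EFinM; apply: cvgeZl.
  - by move=> n; apply/measurable_EFinP/measurable_funM.
  - by move=> n t _; rewrite lee_fin mulr_ge0.
  - by move=> t _ m n mn; rewrite lee_fin ler_wpM2l// g_nd.
by congr (limn _); apply/funext => n; exact: integral_cond_prob_nnsfun.
Qed.

Lemma integral_cond_probT : (\int[P]_t (X t)%:E = P A)%E.
Proof.
have := cpX.2 _ measurableT; by rewrite preimage_setT setIT => ->.
Qed.

Lemma cond_prob_orthogonal {g : R -> R} {M : R} : measurable_fun setT g ->
    (forall x, 0 <= g x <= M) ->
  (\int[P]_t ((\1_A t - X t) * g (X t))%:E = 0)%E.
Proof.
move=> mg g0M; have mgX : measurable_fun setT (g \o X) by exact: measurableT_comp.
have iAg : P.-integrable setT (EFin \o (fun t => \1_A t * g (X t))).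
  apply: (@bounded_integrable _ _ _ P _ M); first exact: measurable_funM.
  move=> t; rewrite normrM indicE; have /andP[g0 gM] := g0M (X t).
  case: (t \in A); rewrite ?normr1 ?normr0 ?mul1r ?mul0r ?ger0_norm//.
  exact: le_trans gM.
have iXg : P.-integrable setT (EFin \o (fun t => X t * g (X t))).
  apply: (@bounded_integrable _ _ _ P _ M); first exact: measurable_funM.
  move=> t; have /andP[g0 gM] := g0M (X t); have /andP[x0 x1] := X01 t.
  rewrite normrM !ger0_norm//; nra.
under eq_integral do rewrite mulrBl EFinB.
rewrite integralB_EFin//.
have -> : (\int[P]_t (\1_A t * g (X t))%:E = \int[P]_(t in A) (g (X t))%:E)%E.
  rewrite [RHS]integral_mkcond epatch_indic.
  by apply: eq_integral => t _; rewrite /= mulrC EFinM.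
rewrite integral_cond_prob// ?subee//; first exact: integrable_fin_num.
by move=> x; case/andP: (g0M x).
Qed.

Lemma measurable_dual_bound (p : R) :
  measurable_fun setT (fun t => dual_bound p (\1_A t) (X t)).
Proof.
have mw := measurable_dual_weight (sqr_ge0 p).
apply: measurable_funD.
  by apply: measurable_funB; [exact: measurable_funD | exact: measurable_funM].
by apply: measurable_funM; [exact: measurable_funB | exact: measurableT_comp].
Qed.

Let iX : P.-integrable setT (EFin \o X).
Proof.
apply: (@bounded_integrable _ _ _ P _ 1) => // t.
by rewrite ger0_norm; case/andP: (X01 t).
Qed.

Let iA : P.-integrable setT (EFin \o (\1_A : T -> R)).
Proof. exact: integrable_indic. Qed.

Let iC (c : R) : P.-integrable setT (EFin \o cst c).
Proof. exact: finite_measure_integrable_cst. Qed.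

Lemma integral_cond_prob_affine {p : R} (c k : R) : P A = p%:E ->
  (\int[P]_t (c + X t - k * \1_A t)%:E = (c + p - k * p)%:E)%E.
Proof.
move=> PA; have iCc := iC c; have iCX := integrableD measurableT iCc iX.
have ikA := integrableZl measurableT k iA.
transitivity (\int[P]_t c%:E + \int[P]_t (X t)%:E -
              \int[P]_t (k * \1_A t)%:E)%E.
  by rewrite -integralD_EFin// -integralB_EFin.
have -> : (\int[P]_t (k * \1_A t)%:E = k%:E * \int[P]_t (\1_A t)%:E)%E.
  exact: (integralZl measurableT iA k).
rewrite integral_cst//= probability_setT mule1.
rewrite integral_cond_probT integral_indic//= setIT PA.
by rewrite -EFinM -EFinD.
Qed.

Lemma integral_dual_bound (p : R) : P A = p%:E ->
  (\int[P]_t (dual_bound p (\1_A t) (X t))%:E = (p * (1 - p))%:E)%E.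
Proof.
move=> PA; pose w := dual_weight (p ^+ 2).
have mw : measurable_fun setT w := measurable_dual_weight (sqr_ge0 p).
have w02 x : 0 <= w x <= 2 by rewrite dual_weight_ge0 ?dual_weight_le2 ?sqr_ge0.
have iW : P.-integrable setT (EFin \o (fun t => (\1_A t - X t) * w (X t))).
  apply: (@bounded_integrable _ _ _ P _ 2).
    by apply: measurable_funM; [exact: measurable_funB | exact: measurableT_comp].
  move=> t; have := w02 (X t); have := X01 t; rewrite indicE ler_norml.
  by case: (t \in A) => /=; nra.
rewrite /dual_bound -/w; under eq_integral do rewrite EFinD.
rewrite integralD_EFin//=; last first.
  exact: (integrableB measurableT (integrableD measurableT (iC _) iX)
                                  (integrableZl measurableT (2 * p) iA)).
rewrite (integral_cond_prob_affine _ _ PA) (cond_prob_orthogonal mw w02).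
by rewrite adde0; congr (_%:E); ring.
Qed.

End cond_prob.

Lemma coherent_integral_dist_le {R : realType} {d : measure_display}
    {T : measurableType d} {P : probability T R} {A : set T} {X Y : T -> R}
    {p : R} :
  coherent_pair P A X Y -> P A = p%:E ->
  (\int[P]_t (`|X t - Y t|)%:E <= (2 * p * (1 - p))%:E)%E.
Proof.
case=> mA [X01 [Y01 [cpX cpY]]] PA.
have bound_ge0 Z : (forall t, 0 <= Z t <= 1) ->
    forall t, 0 <= dual_bound p (\1_A t) (Z t).
  by move=> Z01 t; rewrite indicE dual_bound_ge0.
have mbound Z : is_cond_prob P A Z ->
    measurable_fun setT (fun t => (dual_bound p (\1_A t) (Z t))%:E).
  by move=> cpZ; apply/measurable_EFinP; exact: measurable_dual_bound mA cpZ p.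
apply: (@le_trans _ _ (\int[P]_t ((dual_bound p (\1_A t) (X t))%:E +
                                   (dual_bound p (\1_A t) (Y t))%:E))%E).
  apply: ge0_le_integral => //.
  - apply/measurable_EFinP/measurableT_comp => //.
    exact: measurable_funB cpX.1 cpY.1.
  - by apply: emeasurable_funD; exact: mbound.
  - by move=> t _; rewrite -EFinD lee_fin indicE dist_le_dual_bound.
rewrite ge0_integralD//.
- by rewrite !integral_dual_bound// -EFinD lee_fin; nra.
- by move=> t _; rewrite lee_fin (bound_ge0 _ X01).
- exact: mbound.
- by move=> t _; rewrite lee_fin (bound_ge0 _ Y01).
- exact: mbound.
Qed.

Lemma atoms01_le_integral_dist {R : realType} {d : measure_display}
    {T : measurableType d} {P : probability T R} {Y : T -> R} {c : R} :
  measurable_fun setT Y -> 0 <= c <= 1 ->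
  ((1 - c)%:E * P (Y @^-1` [set 1%R]) + c%:E * P (Y @^-1` [set 0%R]) <=
   \int[P]_t (`|c - Y t|)%:E)%E.
Proof.
move=> mY /andP[c0 c1].
have mE r : measurable (Y @^-1` [set r]) by rewrite -[_ @^-1` _]setTI; exact: mY.
have atom_integral (k r : R) : 0 <= k ->
    (k%:E * P (Y @^-1` [set r]) = \int[P]_t (k * \1_(Y @^-1` [set r]) t)%:E)%E.
  move=> k0; under eq_integral do rewrite EFinM.
  rewrite ge0_integralZl_EFin//= ?integral_indic ?setIT//.
  exact/measurable_EFinP/measurable_indic.
have indE r t : \1_(Y @^-1` [set r]) t = (Y t == r)%:R :> R.
  by rewrite indicE; case: eqP => Yr; [rewrite mem_set | rewrite memNset].
have atom_ge0 (k r : R) t : 0 <= k -> (0 <= (k * \1_(Y @^-1` [set r]) t)%:E)%E.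
  by move=> k0; rewrite lee_fin indE mulr_ge0.
have matom (k r : R) :
    measurable_fun setT (fun t => (k * \1_(Y @^-1` [set r]) t)%:E).
  exact/measurable_EFinP/measurable_funM/measurable_indic.
rewrite !atom_integral ?subr_ge0// -ge0_integralD//; last 2 first.
- by move=> t _; rewrite atom_ge0 ?subr_ge0.
- by move=> t _; rewrite atom_ge0.
apply: ge0_le_integral => //.
- by move=> t _; rewrite adde_ge0 ?atom_ge0 ?subr_ge0.
- exact: emeasurable_funD.
- by apply/measurable_EFinP/measurableT_comp => //; exact: measurable_funB.
move=> t _; rewrite -EFinD lee_fin !indE.
have [->|Y1] := eqVneq (Y t) 1.
  by rewrite oner_eq0 mulr1 mulr0 addr0 distrC ger0_norm ?subr_ge0.
have [->|Y0] := eqVneq (Y t) 0; first by rewrite mulr1 mulr0 add0r subr0 ger0_norm.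
by rewrite !mulr0 addr0.
Qed.

Theorem corollary2p5 (R : realType) (d : measure_display) (T : measurableType d)
  (P : probability T R) (A : set T) (X Y : T -> R) (p : R) :
  coherent_pair P A X Y ->
  (\int[P]_t (X t)%:E = p%:E)%E ->
  (\int[P]_t (Y t)%:E = p%:E)%E ->
  [/\ (\int[P]_t (`|X t - Y t|)%:E <= (2 * p * (1 - p))%:E)%E,
      2 * p * (1 - p) <= 1 / 2 &
      ({ae P, forall t, X t = p} ->
       P (Y @^-1` [set 1]) = p%:E ->
       P (Y @^-1` [set 0]) = (1 - p)%:E ->
       (\int[P]_t (`|X t - Y t|)%:E = (2 * p * (1 - p))%:E)%E)].
Proof.
(* E[Y] = P A = E[X] holds anyway. *)
move=> coh EX _; have [mA [_ [_ [cpX [mY _]]]]] := coh.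
have PA : P A = p%:E by rewrite -EX (integral_cond_probT cpX).
have p01 : 0 <= p <= 1.
  by rewrite -!lee_fin -PA measure_ge0 probability_le1.
have dist_le := coherent_integral_dist_le coh PA.
split => //; first by have := sqr_ge0 (p - 1 / 2); nra.
move=> Xp PY1 PY0; apply/le_anti; rewrite dist_le /=.
have -> : (\int[P]_t (`|X t - Y t|)%:E = \int[P]_t (`|p - Y t|)%:E)%E.
  apply: ae_eq_integral => //.
  - apply/measurable_EFinP/measurableT_comp => //.
    exact: measurable_funB cpX.1 mY.
  - by apply/measurable_EFinP/measurableT_comp => //; exact: measurable_funB.
  - by apply: filterS Xp => t -> _.
apply: le_trans (atoms01_le_integral_dist mY p01).
by rewrite PY1 PY0 -!EFinM -EFinD lee_fin; nra.
Qed.
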